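(* Let $(X,d)$ be a compact doubling metric space with $\operatorname{diam}(X,d)=1/2$ and $(\mathcal S,D_2)$ a hyperbolic filling with parameters $a\ge\lambda\ge6$. Let $\rho:\mathcal S\to(0,\infty)$ satisfy (H3'). Let $k\ge0$, $v\in\mathcal S_k$, and let $\gamma=(v_1,\dots,v_N)$ be a horizontal path of level $k+1$ with $\pi_1(v_i)\in B(\pi_1(v),3a^{-k})$ for all $i$, $\pi_1(v_1)\in B(\pi_1(v),a^{-k})$ and $\pi_1(v_N)\notin B(\pi_1(v),2a^{-k})$. Let $w$ be the parent of $v_1$. Then \[ \sum_{i=1}^{N-1}\pi^*(v_i)\wedge\pi^*(v_{i+1})\ge\max\{\pi^*(v),\pi^*(w)\}. \]
   Context: Hyperbolic filling: $X_0\subset X_1\subset\cdots$ increasing, $X_n$ maximal $a^{-n}$-separated in $X$ ($X_0=\{x_0\}$); $\mathcal S_n=\{(x,n):x\in X_n\}$, $\mathcal S=\bigcup_n\mathcal S_n$, $\pi_1(x,n)=x$, $\pi_2(x,n)=n$, $v_0=(x_0,0)$, $B_v=B(\pi_1(v),a^{-\pi_2(v)})$. Each $(x,n)$, $n\ge1$, has a fixed parent $(y,n-1)$ with $d(x,y)=\min_{z\in X_{n-1}}d(x,z)$; genealogy $g(v)=(v_0,\dots,v_k=v)$. Graph $(\mathcal S,D_2)$: edges vertex–parent and horizontal edges between distinct $(x,n),(y,n)$ with $B(x,\lambda a^{-n})\cap B(y,\lambda a^{-n})\ne\emptyset$. A horizontal path of level $k+1$ is a sequence of vertices of $\mathcal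 S_{k+1}$, consecutive ones joined by horizontal edges. For $u\in\mathcal S_k$, $\Gamma_k(u)$ is the set of horizontal paths $(u_1,\dots,u_n)$ of level $k+1$ with $\pi_1(u_1)\in B_u$ and $\pi_1(u_n)\notin B(\pi_1(u),2a^{-k})$. $\pi(u)=\prod_{w\in g(u)}\rho(w)$; $\rho^*(u)=\min\{\rho(w):\pi_2(w)=\pi_2(u),D_2(u,w)\le1\}$; $\pi^*(u)=\min\{\pi(w):\pi_2(w)=\pi_2(u),D_2(u,w)\le1\}$; for a horizontal path $\gamma=(u_1,\dots,u_N)$, $L_h(\gamma,\rho)=\sum_{j=1}^{N-1}\rho^*(u_j)\wedge\rho^*(u_{j+1})$. (H3'): for all $k\ge0$, $u\in\mathcal S_k$, $\gamma\in\Gamma_k(u)$, $L_h(\gamma,\rho)\ge1$. *)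

From HB Require Import structures.
From mathcomp Require Import all_boot all_order all_algebra.
From mathcomp Require Import all_classical all_reals.
Set Implicit Arguments. Unset Strict Implicit. Unset Printing Implicit Defensive.
Import Order.TTheory GRing.Theory Num.Theory.
Local Open Scope classical_set_scope.
Local Open Scope ring_scope.

Section HypFilling.
Variables (R : realType) (X : Type) (d : X -> X -> R).

Definition ball_d (x : X) (r : R) : set X := [set y | d x y < r].

Definition is_metric : Prop :=
  [/\ forall x y, 0 <= d x y,
      forall x y, d x y = 0 <-> x = y,
      forall x y, d x y = d y x &
      forall x y z, d x z <= d x y + d y z].

Definition metric_compact : Prop :=
  forall u : nat -> X, exists (phi : nat -> nat) (l : X),
    (forall n m, (n < m)%N -> (phi n < phi m)%N) /\
    (forall e : R, 0 < e -> exists N, forall n, (N <= n)%N -> d (u (phi n)) l < e).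

Definition metric_doubling : Prop :=
  exists C : nat, forall (x : X) (r : R), 0 < r ->
    exists s : seq X, (size s <= C)%N /\
      ball_d x (2 * r) `<=` [set y | exists2 i, (i < size s)%N & d (nth x s i) y < r].

Definition diam : R := sup [set r | exists x y, r = d x y].

Definition separated (eps : R) (A : set X) : Prop :=
  forall x y, A x -> A y -> x <> y -> eps <= d x y.

Definition maximal_separated (eps : R) (A : set X) : Prop :=
  separated eps A /\ forall B : set X, A `<=` B -> separated eps B -> B = A.

Variables (a lam : R) (Xn : nat -> set X) (x0 : X) (par : X -> nat -> X).

(* Xn, x0, par form a hyperbolic filling with parameters a, lam.
   par x n is the first coordinate of the fixed parent (y, n-1) of (x, n). *)
Definition hyperbolic_filling : Prop :=
  [/\ forall n, Xn n `<=` Xn n.+1,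
      forall n, maximal_separated (a ^- n) (Xn n),
      Xn 0%N = [set x0] &
      forall n x, Xn n.+1 x ->
        Xn n (par x n.+1) /\ forall z, Xn n z -> d x (par x n.+1) <= d x z].

Definition vtx (u : X * nat) : Prop := Xn u.2 u.1.

Definition hedge (u w : X * nat) : Prop :=
  [/\ u.2 = w.2, u <> w &
      exists z, ball_d u.1 (lam * a ^- u.2) z /\ ball_d w.1 (lam * a ^- w.2) z].

Definition pedge (u w : X * nat) : Prop :=
  (u.2 = w.2.+1 /\ w.1 = par u.1 u.2) \/ (w.2 = u.2.+1 /\ u.1 = par w.1 w.2).

Definition edge (u w : X * nat) : Prop := vtx u /\ vtx w /\ (pedge u w \/ hedge u w).

(* D2_le n u w  <->  D2(u,w) <= n  (graph distance in (S, D2)) *)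
Fixpoint D2_le (n : nat) (u w : X * nat) : Prop :=
  match n with
  | 0%N => u = w
  | m.+1 => D2_le m u w \/ exists z, edge u z /\ D2_le m z w
  end.

Variable rho : X * nat -> R.

(* pi(u) = product of rho over the genealogy of u *)
Fixpoint piv (x : X) (n : nat) : R :=
  match n with
  | 0%N => rho (x, 0%N)
  | m.+1 => rho (x, m.+1) * piv (par x m.+1) m
  end.

Definition pi_ (u : X * nat) : R := piv u.1 u.2.

Definition min_nbhd (f : X * nat -> R) (u : X * nat) : R :=
  inf [set r | exists w, [/\ vtx w, w.2 = u.2, D2_le 1 u w & r = f w]].

Definition rhostar := min_nbhd rho.
Definition pistar := min_nbhd pi_.

(* horizontal path of level k, given by the first coordinates of its vertices *)
Definition hpath (k : nat) (g : seq X) : Prop :=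
  (0 < size g)%N /\
  (forall i, (i < size g)%N -> vtx (nth x0 g i, k)) /\
  (forall i, (i.+1 < size g)%N -> hedge (nth x0 g i, k) (nth x0 g i.+1, k)).

Definition Gamma (k : nat) (u : X * nat) (g : seq X) : Prop :=
  [/\ hpath k.+1 g, ball_d u.1 (a ^- k) (head x0 g) &
      ~ ball_d u.1 (2 * a ^- k) (last x0 g)].

Definition Lh (k : nat) (g : seq X) : R :=
  \sum_(i < (size g).-1)
     Num.min (rhostar (nth x0 g i, k)) (rhostar (nth x0 g i.+1, k)).

Definition H3' : Prop :=
  forall (k : nat) (u : X * nat), vtx u -> u.2 = k ->
    forall g, Gamma k u g -> 1 <= Lh k.+1 g.

End HypFilling.

(* If y is a level-k vertex with d(y, x) < 5 a^-k, the parent of every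
   neighbour u of (x, k+1) is adjacent to (y, k), the point x lying in both
   balls of radius lam a^-k; hence pi(u) = rho(u) pi(par u) >= rho*(x, k+1) pi*(y).
   Multiplying (H3') for v by pi*(y) gives pi*(y) <= sum pi*(v_i) /\ pi*(v_{i+1}),
   and both y = v and y = w (the parent of v_1) lie within 5 a^-k of every v_i. *)
From HB Require Import structures.
From mathcomp Require Import all_boot all_order all_algebra.
From mathcomp Require Import all_classical all_reals.
From mathcomp Require Import lra zify.
Import Order.TTheory GRing.Theory Num.Theory.
Local Open Scope classical_set_scope.
Local Open Scope ring_scope.

Section MetricFacts.
Context {R : realType} {X : Type} {d : X -> X -> R}.
Hypothesis d_metric : is_metric d.

Lemma maximal_separated_near {eps A} x : 0 < eps -> maximal_separated d eps A ->
  exists2 z, A z & d x z < eps.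
Proof.
move=> eps_gt0 [sepA maxA]; apply: contrapT => noz.
have far z : A z -> eps <= d x z.
  by move=> Az; rewrite leNgt; apply/negP => close; apply: noz; exists z.
have [_ d0 dC _] := d_metric.
have sepAx : separated d eps (A `|` [set x]).
  move=> y1 y2 [h1|->] [h2|->] ne12 //; first exact: sepA.
  - by rewrite dC; exact: far.
  - exact: far.
have Ax : A x by rewrite -(maxA _ (@subsetUl _ A [set x]) sepAx); right.
by have := far x Ax; rewrite (proj2 (d0 x x) erefl) leNgt eps_gt0.
Qed.

End MetricFacts.

Section Neighbourhoods.
Context {R : realType} {X : Type} {d : X -> X -> R} {a lam : R}
  {Xn : nat -> set X} {par : X -> nat -> X}.

Local Notation D2_le1 := (D2_le d a lam Xn par 1).
Local Notation min_nbhd := (min_nbhd d a lam Xn par).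

Lemma min_nbhd_le {f u w} : (forall v, vtx Xn v -> 0 <= f v) ->
  vtx Xn w -> w.2 = u.2 -> D2_le1 u w -> min_nbhd f u <= f w.
Proof.
move=> f_ge0 vw wu uw; apply: ge_inf; last by exists w.
by exists 0 => r [v [vv _ _ ->]]; exact: f_ge0.
Qed.

Lemma min_nbhd_ge f u c : vtx Xn u ->
  (forall w, vtx Xn w -> w.2 = u.2 -> D2_le1 u w -> c <= f w) ->
  c <= min_nbhd f u.
Proof.
move=> vu c_le; apply: lb_le_inf; first by exists (f u), u; split => //; left.
by move=> r [w [vw wu uw ->]]; exact: c_le.
Qed.

Lemma min_nbhd_ge0 {f u} : (forall v, vtx Xn v -> 0 <= f v) -> vtx Xn u ->
  0 <= min_nbhd f u.
Proof. by move=> f_ge0 vu; apply: min_nbhd_ge => // w vw _ _; exact: f_ge0. Qed.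

Lemma D2_le1_same_level u w : w.2 = u.2 -> D2_le1 u w ->
  u = w \/ hedge d a lam u w.
Proof.
move=> wu [-> | [z [[_ [_ uz]] /= zw]]]; first by left.
subst z; case: uz => [[] [uw _] | ]; [by move: wu uw; lia.. | by right].
Qed.

Lemma D2_le1_of_common_point {u w} z : vtx Xn u -> vtx Xn w -> u.2 = w.2 ->
  ball_d d u.1 (lam * a ^- u.2) z -> ball_d d w.1 (lam * a ^- w.2) z ->
  D2_le1 u w.
Proof.
move=> vu vw uw uz wz; have [-> | ne] := pselect (u = w); first by left.
by right; exists w; split; [split; [|split; [|right; split => //; exists z]] | ].
Qed.

End Neighbourhoods.

Section Filling.
Context {R : realType} {X : Type} {d : X -> X -> R} {a lam : R}
  {Xn : nat -> set X} {x0 : X} {par : X -> nat -> X} {rho : X * nat -> R}.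
Hypotheses (d_metric : is_metric d) (filling : hyperbolic_filling d a Xn x0 par).
Hypotheses (lam_ge6 : 6 <= lam) (lam_le_a : lam <= a).
Hypothesis rho_gt0 : forall u, vtx Xn u -> 0 < rho u.

Local Notation D2_le1 := (D2_le d a lam Xn par 1).
Local Notation rhostar := (rhostar d a lam Xn par rho).
Local Notation pistar := (pistar d a lam Xn par rho).

Let a_gt0 : 0 < a. Proof. by apply: lt_le_trans lam_le_a; apply: lt_le_trans lam_ge6. Qed.

Lemma scale_gt0 n : 0 < a ^- n.
Proof. by rewrite invr_gt0 exprn_gt0. Qed.

Lemma lam_scale_le n : lam * a ^- n.+1 <= a ^- n.
Proof.
rewrite exprSr invfM mulrCA ler_piMr ?(ltW (scale_gt0 n)) //.
by rewrite ler_pdivrMr // mul1r.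
Qed.

Lemma par_vtx {n x} : Xn n.+1 x -> Xn n (par x n.+1).
Proof. by case: filling => _ _ _ hpar /hpar []. Qed.

Lemma dist_par_lt {n x} : Xn n.+1 x -> d x (par x n.+1) < a ^- n.
Proof.
case: (filling) => _ maxsep _ hpar /hpar [_ par_min].
have [z Xnz xz] := maximal_separated_near d_metric x (scale_gt0 n) (maxsep n).
exact: le_lt_trans (par_min z Xnz) xz.
Qed.

Lemma piv_gt0 n x : Xn n x -> 0 < piv par rho x n.
Proof.
elim: n x => [|n IH] x Xnx /=; first exact: (rho_gt0 (x, 0%N)).
by rewrite mulr_gt0 //; [exact: (rho_gt0 (x, n.+1)) | exact/IH/par_vtx].
Qed.

Lemma pi_ge0 u : vtx Xn u -> 0 <= pi_ par rho u.
Proof. by case: u => x n /piv_gt0 /ltW. Qed.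

Lemma rho_ge0 u : vtx Xn u -> 0 <= rho u.
Proof. by move/rho_gt0/ltW. Qed.

Lemma nbhd_dist_lt {n x u} : D2_le1 (x, n) (u, n) -> d x u < 2 * lam * a ^- n.
Proof.
have [_ d0 dC dT] := d_metric.
case/D2_le1_same_level => // [[->] | [_ _ [z [/= xz uz]]]].
  by rewrite (proj2 (d0 u u) erefl) !mulr_gt0 ?scale_gt0 // (lt_le_trans _ lam_ge6).
by apply: le_lt_trans (dT _ z _) _; rewrite (dC z u); move: xz uz; rewrite /ball_d /=; lra.
Qed.

Lemma rhostar_pistar_le_pistar k y x : Xn k y -> Xn k.+1 x ->
  d y x < 5 * a ^- k -> rhostar (x, k.+1) * pistar (y, k) <= pistar (x, k.+1).
Proof.
move=> Xky Xkx yx; have [_ _ dC dT] := d_metric.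
apply: min_nbhd_ge => // -[u n] Xku /= nk xu; subst n; rewrite /pi_ /=.
have Xpu : vtx Xn (par u k.+1, k) := par_vtx Xku.
apply: ler_pM; [exact: min_nbhd_ge0 rho_ge0 _ | exact: min_nbhd_ge0 pi_ge0 _ | |].
  exact: min_nbhd_le rho_ge0 Xku _ xu.
apply: (min_nbhd_le (u := (y, k)) pi_ge0 Xpu erefl); apply: (D2_le1_of_common_point x) => //=.
  apply: lt_le_trans yx _; rewrite ler_wpM2r ?(ltW (scale_gt0 k)) //.
  by apply: le_trans lam_ge6; rewrite ler_nat.
have ux := nbhd_dist_lt xu.
have pu : d u (par u k.+1) < a ^- k := dist_par_lt Xku.
have step := lam_scale_le k; have := ler_wpM2r (ltW (scale_gt0 k)) lam_ge6.
have := scale_gt0 k; move: (dT (par u k.+1) u x).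
by rewrite (dC u x) (dC (par u k.+1) u) /ball_d /=; lra.
Qed.

Lemma pistar_le_path_sum k y g : Xn k y -> hpath d a lam Xn x0 k.+1 g ->
  (forall i, (i < size g)%N -> d y (nth x0 g i) < 5 * a ^- k) ->
  1 <= Lh d a lam Xn x0 par rho k.+1 g ->
  pistar (y, k) <= \sum_(i < (size g).-1)
    Num.min (pistar (nth x0 g i, k.+1)) (pistar (nth x0 g i.+1, k.+1)).
Proof.
move=> Xky [_ [Xkg _]] yg Lh_ge1.
have pis_ge0 : 0 <= pistar (y, k) by exact: min_nbhd_ge0 pi_ge0 _.
have child i : (i < size g)%N ->
    rhostar (nth x0 g i, k.+1) * pistar (y, k) <= pistar (nth x0 g i, k.+1).
  by move=> ig; apply: rhostar_pistar_le_pistar => //; [exact: Xkg | exact: yg].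
rewrite -[leLHS]mulr1; apply: le_trans (ler_wpM2l pis_ge0 Lh_ge1) _.
rewrite /Lh mulr_sumr; apply: ler_sum => -[i /= ig] _.
rewrite le_min mulrC; apply/andP; split.
- by apply: le_trans (child i _); rewrite ?ler_wpM2r ?ge_min ?lexx //; lia.
- by apply: le_trans (child i.+1 _); rewrite ?ler_wpM2r ?ge_min ?lexx ?orbT //; lia.
Qed.

End Filling.

Theorem lemma3p18 (R : realType) (X : Type) (d : X -> X -> R)
  (a lam : R) (Xn : nat -> set X) (x0 : X) (par : X -> nat -> X)
  (rho : X * nat -> R) :
  is_metric d -> metric_compact d -> metric_doubling d ->
  diam d = 1 / 2 ->
  6 <= lam -> lam <= a ->
  hyperbolic_filling d a Xn x0 par ->
  (forall u, vtx Xn u -> 0 < rho u) ->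
  H3' d a lam Xn x0 par rho ->
  forall (k : nat) (xv : X) (g : seq X),
    Xn k xv ->
    hpath d a lam Xn x0 k.+1 g ->
    (forall i, (i < size g)%N -> ball_d d xv (3 * a ^- k) (nth x0 g i)) ->
    ball_d d xv (a ^- k) (head x0 g) ->
    ~ ball_d d xv (2 * a ^- k) (last x0 g) ->
    let pis := pistar d a lam Xn par rho in
    Num.max (pis (xv, k)) (pis (par (head x0 g) k.+1, k))
    <= \sum_(i < (size g).-1)
         Num.min (pis (nth x0 g i, k.+1)) (pis (nth x0 g i.+1, k.+1)).
Proof.
move=> d_metric _ _ _ lam_ge6 lam_le_a filling rho_gt0 H3 k xv g Xkv gpath
  g_near head_near last_far /=.
have Lh_ge1 : 1 <= Lh d a lam Xn x0 par rho k.+1 g by apply: (H3 k (xv, k)).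
have bound := pistar_le_path_sum d_metric filling lam_ge6 lam_le_a rho_gt0.
have [g_ne0 [Xkg _]] := gpath.
have head_nth : head x0 g = nth x0 g 0 by case: (g).
have Xkh : Xn k.+1 (head x0 g) by rewrite head_nth; exact: Xkg.
have [_ _ dC dT] := d_metric.
have scale_pos := scale_gt0 lam_ge6 lam_le_a k.
have near3 i : (i < size g)%N -> d xv (nth x0 g i) < 3 * a ^- k := g_near i.
have near_v i : (i < size g)%N -> d xv (nth x0 g i) < 5 * a ^- k.
  by move=> ig; have := near3 i ig; lra.
have wh : d (par (head x0 g) k.+1) (head x0 g) < a ^- k.
  by rewrite dC; exact: (dist_par_lt d_metric filling lam_ge6 lam_le_a Xkh).
have near_w i : (i < size g)%N -> d (par (head x0 g) k.+1) (nth x0 g i) < 5 * a ^- k.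
  move=> ig; have := near3 i ig; have := head_near; rewrite /ball_d /= dC.
  have := dT (par (head x0 g) k.+1) (head x0 g) (nth x0 g i).
  have := dT (head x0 g) xv (nth x0 g i); lra.
rewrite ge_max; apply/andP; split; first exact: (bound k xv g).
exact: (bound k _ g (par_vtx filling Xkh)).
Qed.
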